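(* Let $K$ be a non-archimedean local field with $\mathrm{char}(K)\neq 2$, let $i=\sqrt{-1}$, and let $S$ be the set of all quadruples $(A,B,C,D)\in\mathrm{SL}_2(K(i))^4$ such that $A$ is diagonal and $ABA^{-1}B^{-1}CDC^{-1}D^{-1}=-I$. For every word $w$ in the free group $F_4$ of rank four, there exists $(A,B,C,D)\in S$ such that $\pi w(A,B,C,D)$ does not have order $2$.
   Context: For a word $w\in F_4$ and $(A,B,C,D)\in\mathrm{SL}_2(K(i))^4$, $w(A,B,C,D)$ is the evaluation of $w$ at $(A,B,C,D)$, and $\pi w(A,B,C,D)$ is its image in $\mathrm{PSL}_2(K(i))$ under the quotient map $\pi$. *)

From HB Require Import structures.
From mathcomp Require Import all_boot all_order all_algebra.
Set Implicit Arguments. Unset Strict Implicit. Unset Printing Implicit Defensive.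
Import Order.TTheory GRing.Theory Num.Theory.
Local Open Scope ring_scope.

(* The valuation v is only meaningful on nonzero elements (v 0 = +oo). *)

Definition vge (K : fieldType) (v : K -> int) (x : K) (n : int) : Prop :=
  x = 0 \/ (n <= v x)%R.

Definition is_discrete_valuation (K : fieldType) (v : K -> int) : Prop :=
  [/\ (forall x y : K, x != 0 -> y != 0 -> v (x * y) = v x + v y),
      (forall x y : K, x != 0 -> y != 0 -> x + y != 0 ->
          Order.min (v x) (v y) <= v (x + y)) &
      (exists pi : K, pi != 0 /\ v pi = 1)].

(* the residue field O/m is finite: finitely many representatives *)
Definition finite_residue_field (K : fieldType) (v : K -> int) : Prop :=
  exists s : seq K, forall x : K, vge v x 0 ->
    exists2 r, r \in s & vge v (x - r) 1.

Definition v_cauchy (K : fieldType) (v : K -> int) (u : nat -> K) : Prop :=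
  forall N : int, exists M : nat, forall m n : nat,
    (M <= m)%N -> (M <= n)%N -> vge v (u m - u n) N.

Definition v_converges (K : fieldType) (v : K -> int) (u : nat -> K) (l : K) :=
  forall N : int, exists M : nat, forall n : nat, (M <= n)%N -> vge v (u n - l) N.

Definition v_complete (K : fieldType) (v : K -> int) : Prop :=
  forall u : nat -> K, v_cauchy v u -> exists l, v_converges v u l.

Definition nonarch_local_field (K : fieldType) : Prop :=
  exists v : K -> int,
    [/\ is_discrete_valuation v, v_complete v & finite_residue_field v].

Definition is_SL2 (L : fieldType) (M : 'M[L]_2) : Prop := \det M = 1.

Definition is_diag2 (L : fieldType) (M : 'M[L]_2) : Prop :=
  M 0 1 = 0 /\ M 1 0 = 0.

Definition comm2 (L : fieldType) (X Y : 'M[L]_2) : 'M[L]_2 :=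
  X *m Y *m invmx X *m invmx Y.

Definition in_S (L : fieldType) (A B C D : 'M[L]_2) : Prop :=
  [/\ is_SL2 A, is_SL2 B, is_SL2 C, is_SL2 D &
      (is_diag2 A /\ comm2 A B *m comm2 C D = - 1%:M)].

(* a word in the free group F_4 on generators x_0..x_3: a list of letters
   (j, e) standing for x_j (e = false) or x_j^{-1} (e = true) *)
Definition word4 := seq ('I_4 * bool).

Definition gen4 (L : fieldType) (A B C D : 'M[L]_2) (j : 'I_4) : 'M[L]_2 :=
  match val j with 0%N => A | 1%N => B | 2%N => C | _ => D end.

Definition eval_word (L : fieldType) (w : word4) (A B C D : 'M[L]_2) : 'M[L]_2 :=
  foldr (fun le acc =>
           let g := gen4 A B C D le.1 in (if le.2 then invmx g else g) *m acc)
        1%:M w.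

(* the image of M in PSL_2 = SL_2 / {±I} has order exactly 2 *)
Definition psl_order2 (L : fieldType) (M : 'M[L]_2) : Prop :=
  (M *m M = 1%:M \/ M *m M = - 1%:M) /\ ~ (M = 1%:M \/ M = - 1%:M).

From HB Require Import structures.
From mathcomp Require Import all_boot all_order all_algebra.
Import GRing.Theory.
Local Open Scope ring_scope.

(* The matrices I = diag(i, -i) and J = [[0, 1], [-1, 0]] generate the
   quaternion group {±1, ±I, ±J, ±IJ} in SL_2(L); its image in PSL_2(L) is
   the Klein four-group, and [I, J] = -1.  Evaluating w at quaternion units
   thus gives ±1 as soon as the assigned Klein-group elements, counted with
   the parities of the exponent sums of the four letters in w, cancel.  If
   x_2 has odd exponent sum, take (I, J, I^a J^b, 1) where a, b are the
   parities for x_0, x_1; if x_3 has, take (I, J, 1, I^a J^b); otherwise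
   take (1, 1, I, J).  In each case [A, B][C, D] = [I, J] = -1 while the
   image of w in PSL_2(L) is trivial. *)

Section TwoByTwo.
Context {R : comPzRingType}.

Definition mx2 (a b c d : R) : 'M[R]_2 :=
  \matrix_(r < 2, s < 2) if r == 0 then (if s == 0 then a else b)
                         else (if s == 0 then c else d).

Lemma mul_mx2 a b c d a' b' c' d' :
  mx2 a b c d *m mx2 a' b' c' d' =
  mx2 (a * a' + b * c') (a * b' + b * d') (c * a' + d * c') (c * b' + d * d').
Proof.
apply/matrixP => r s; rewrite !mxE !big_ord_recl big_ord0 !mxE /=.
by case: r => [[|[|//]] ?]; case: s => [[|[|//]] ?]; rewrite /= addr0.
Qed.

Lemma oppmx2 a b c d : - mx2 a b c d = mx2 (- a) (- b) (- c) (- d).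
Proof. by apply/matrixP => r s; rewrite !mxE; case: (r == 0); case: (s == 0). Qed.

Lemma mx2_scalar a : a%:M = mx2 a 0 0 a.
Proof.
by apply/matrixP => r s; rewrite !mxE; case: r => [[|[|//]] ?]; case: s => [[|[|//]] ?].
Qed.

Lemma det_mx2 a b c d : \det (mx2 a b c d) = a * d - b * c.
Proof.
rewrite (expand_det_row _ 0) !big_ord_recl big_ord0 /cofactor !det_mx11 !mxE /=.
by rewrite /bump /= expr0 expr1 !mul1r mulN1r addr0 mulrN.
Qed.

End TwoByTwo.

Definition up_to_sign {R : pzRingType} {n : nat} (X Y : 'M[R]_n) : Prop :=
  X = Y \/ X = - Y.

Lemma up_to_sign_trans (R : pzRingType) n (X Y Z : 'M[R]_n) :
  up_to_sign X Y -> up_to_sign Y Z -> up_to_sign X Z.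
Proof. by case=> ->; case=> ->; rewrite ?opprK; [left|right|right|left]. Qed.

Lemma up_to_sign_mul (R : pzRingType) n (X X' Y Y' : 'M[R]_n) :
  up_to_sign X X' -> up_to_sign Y Y' -> up_to_sign (X *m Y) (X' *m Y').
Proof.
by case=> ->; case=> ->; rewrite ?mulNmx ?mulmxN ?opprK; [left|right|right|left].
Qed.

Lemma mulmx1_invmx (R : comUnitRingType) n (A B : 'M[R]_n) :
  A *m B = 1%:M -> invmx A = B.
Proof.
move=> AB1; have [uA _] := mulmx1_unit AB1.
by rewrite -[invmx A]mulmx1 -AB1 mulmxA mulVmx // mul1mx.
Qed.

Section Quaternions.
Context {R : comUnitRingType} (i : R).
Hypothesis i2 : i ^+ 2 = -1.

Definition quat (p q : bool) : 'M[R]_2 :=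
  match p, q with
  | false, false => mx2 1 0 0 1
  | true, false => mx2 i 0 0 (- i)
  | false, true => mx2 0 1 (- 1) 0
  | true, true => mx2 0 i i 0
  end.

Let ii : i * i = -1. Proof. by rewrite -expr2. Qed.

Ltac quat_simpl := rewrite /quat /= ?mx2_scalar ?oppmx2 ?mul_mx2
  ?(mulr0, mul0r, addr0, add0r, subr0, sub0r, mulr1, mul1r, mulrN, mulNr,
     opprK, oppr0, ii).

Lemma quat1 : quat false false = 1%:M.
Proof. by quat_simpl. Qed.

Lemma quat_mul p q p' q' :
  up_to_sign (quat p q *m quat p' q') (quat (p (+) p') (q (+) q')).
Proof.
by case: p; case: q; case: p'; case: q'; quat_simpl;
  first [by left | by right; quat_simpl].
Qed.

Lemma quat_IJ : quat true false *m quat false true = quat true true.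
Proof. by quat_simpl. Qed.

Lemma quat_sqr p q : p || q -> quat p q *m quat p q = - 1%:M.
Proof. by case: p; case: q => //= _; quat_simpl. Qed.

Lemma det_quat p q : \det (quat p q) = 1.
Proof.
by case: p; case: q; rewrite /quat det_mx2; quat_simpl.
Qed.

Lemma quat_unit p q : quat p q \in unitmx.
Proof. by rewrite unitmxE det_quat unitr1. Qed.

Lemma invmx_quatN p q : p || q -> invmx (quat p q) = - quat p q.
Proof. by move=> pq; apply: mulmx1_invmx; rewrite mulmxN quat_sqr // opprK. Qed.

Lemma invmx_quat_up_to_sign p q : up_to_sign (invmx (quat p q)) (quat p q).
Proof.
case: p; case: q; last by left; rewrite quat1 invmx1.
all: by right; rewrite invmx_quatN.
Qed.

End Quaternions.

Definition pick4 {T : Type} (a b c d : T) (j : 'I_4) : T :=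
  match val j with 0%N => a | 1%N => b | 2%N => c | _ => d end.

Definition letter_xor (g : 'I_4 -> bool) (w : word4) : bool :=
  \big[addb/false]_(l <- w) g l.1.

Definition letter_parity (w : word4) (k : nat) : bool :=
  letter_xor (fun j => val j == k) w.

Lemma letter_xor_addb g h w :
  letter_xor (fun j => g j (+) h j) w = letter_xor g w (+) letter_xor h w.
Proof. exact: big_split. Qed.

Lemma letter_xor_andb x g w : letter_xor (fun j => x && g j) w = x && letter_xor g w.
Proof. by rewrite /letter_xor big_distrr. Qed.

Lemma pick4_bool x0 x1 x2 x3 j :
  pick4 x0 x1 x2 x3 j =
  [&& x0 & val j == 0] (+) [&& x1 & val j == 1] (+) [&& x2 & val j == 2]
  (+) [&& x3 & val j == 3].
Proof. by case: j => [[|[|[|[|//]]]] ?]; rewrite /= !andbF ?andbT ?addbF. Qed.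

Lemma letter_xor_pick4 x0 x1 x2 x3 w :
  letter_xor (pick4 x0 x1 x2 x3) w =
  [&& x0 & letter_parity w 0] (+) [&& x1 & letter_parity w 1]
  (+) [&& x2 & letter_parity w 2] (+) [&& x3 & letter_parity w 3].
Proof.
transitivity (letter_xor (fun j => [&& x0 & val j == 0] (+) [&& x1 & val j == 1]
  (+) [&& x2 & val j == 2] (+) [&& x3 & val j == 3]) w).
  by apply: eq_bigr => l _; rewrite pick4_bool.
by rewrite !letter_xor_addb !letter_xor_andb.
Qed.

Lemma comm2_1r (L : fieldType) (X : 'M[L]_2) : X \in unitmx -> comm2 X 1%:M = 1%:M.
Proof. by move=> uX; rewrite /comm2 invmx1 !mulmx1 mulmxV. Qed.

Lemma comm2_1l (L : fieldType) (X : 'M[L]_2) : X \in unitmx -> comm2 1%:M X = 1%:M.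
Proof. by move=> uX; rewrite /comm2 invmx1 mulmx1 mul1mx mulmxV. Qed.

Lemma not_psl_order2_up_to_sign1 (L : fieldType) (M : 'M[L]_2) :
  up_to_sign M 1%:M -> ~ psl_order2 M.
Proof. by move=> pm1 [_ []]. Qed.

Section QuaternionWords.
Context {L : fieldType} (i : L).
Hypothesis i2 : i ^+ 2 = -1.
Local Notation Q := (quat i).

Lemma diag_quat p : is_diag2 (Q p false).
Proof. by case: p; rewrite /is_diag2 /quat !mxE. Qed.

Lemma comm2_quat_IJ : comm2 (Q true false) (Q false true) = - 1%:M.
Proof.
by rewrite /comm2 !invmx_quatN // !mulmxN mulNmx opprK -mulmxA quat_IJ quat_sqr.
Qed.

Lemma in_S_quat a b0 b1 c0 c1 d0 d1 :
  comm2 (Q a false) (Q b0 b1) *m comm2 (Q c0 c1) (Q d0 d1) = - 1%:M ->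
  in_S (Q a false) (Q b0 b1) (Q c0 c1) (Q d0 d1).
Proof.
by move=> rel; split; rewrite /is_SL2 ?det_quat //; split; [exact: diag_quat|].
Qed.

Lemma gen4_quat x0 x1 x2 x3 y0 y1 y2 y3 j :
  gen4 (Q x0 y0) (Q x1 y1) (Q x2 y2) (Q x3 y3) j
  = Q (pick4 x0 x1 x2 x3 j) (pick4 y0 y1 y2 y3 j).
Proof. by rewrite /gen4 /pick4; case: (val j) => [|[|[|]]]. Qed.

Lemma eval_word_quat x0 x1 x2 x3 y0 y1 y2 y3 w :
  up_to_sign (eval_word w (Q x0 y0) (Q x1 y1) (Q x2 y2) (Q x3 y3))
             (Q (letter_xor (pick4 x0 x1 x2 x3) w) (letter_xor (pick4 y0 y1 y2 y3) w)).
Proof.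
elim: w => [|[j e] w IH]; first by rewrite /letter_xor !big_nil quat1; left.
rewrite /letter_xor !big_cons /= gen4_quat.
apply: up_to_sign_trans (quat_mul _ i2 _ _ _ _); apply: up_to_sign_mul IH.
by case: e; [exact: invmx_quat_up_to_sign i2 _ _ | left].
Qed.

Lemma eval_word_quat_trivial x0 x1 x2 x3 y0 y1 y2 y3 w :
  letter_xor (pick4 x0 x1 x2 x3) w = false -> letter_xor (pick4 y0 y1 y2 y3) w = false ->
  ~ psl_order2 (eval_word w (Q x0 y0) (Q x1 y1) (Q x2 y2) (Q x3 y3)).
Proof.
move=> x_triv y_triv; apply: not_psl_order2_up_to_sign1.
by have := eval_word_quat x0 x1 x2 x3 y0 y1 y2 y3 w; rewrite x_triv y_triv quat1.
Qed.

End QuaternionWords.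

Theorem lemma4p3 (K : fieldType) (HK : nonarch_local_field K)
  (Hchar : (2%:R : K) != 0)
  (L : fieldType) (f : {rmorphism K -> L}) (i : L)
  (Hi : i ^+ 2 = -1) (HKi : forall x : L, exists a b : K, x = f a + f b * i)
  (w : word4) :
  exists A B C D : 'M[L]_2, in_S A B C D /\ ~ psl_order2 (eval_word w A B C D).
Proof.
have IJ_rel := comm2_quat_IJ _ Hi.
set p := letter_parity w.
case p2: (p 2).
  exists (quat i true false), (quat i false true),
         (quat i (p 0) (p 1)), (quat i false false).
  split.
    by apply: (in_S_quat _ Hi); rewrite IJ_rel quat1 comm2_1r ?quat_unit // mulmx1.
  by apply: (eval_word_quat_trivial _ Hi); rewrite letter_xor_pick4 -/p p2;
    case: (p 0); case: (p 1); case: (p 3).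
case p3: (p 3).
  exists (quat i true false), (quat i false true),
         (quat i false false), (quat i (p 0) (p 1)).
  split.
    by apply: (in_S_quat _ Hi); rewrite IJ_rel quat1 comm2_1l ?quat_unit // mulmx1.
  by apply: (eval_word_quat_trivial _ Hi); rewrite letter_xor_pick4 -/p p2 p3;
    case: (p 0); case: (p 1).
exists (quat i false false), (quat i false false),
       (quat i true false), (quat i false true).
split.
  by apply: (in_S_quat _ Hi); rewrite IJ_rel quat1 comm2_1l ?unitmx1 // mul1mx.
by apply: (eval_word_quat_trivial _ Hi); rewrite letter_xor_pick4 -/p p2 p3 /= ?andbF.
Qed.
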